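(* Let $\sigma:\mathbb{R}\to\mathbb{R}$ be either a continuous and strictly monotonic function or the ReLU function $\sigma(t)=\max\{t,0\}$. Then for all input and output dimensions $d_{in},d_{out}$, $d_{in}<\omega_{\min}(\sigma,d_{in},d_{out})$.
   Context: A neural network function $F:\mathbb{R}^{d_{in}}\to\mathbb{R}^{d_{out}}$ with $L$ layers and activation $\sigma$ has the form $F=W_L\circ A_{L-1}\circ\dots\circ A_1$, where $A_j(x)=\sigma(W_jx+b_j)$ with $W_j\in\mathbb{R}^{d_j\times d_{j-1}}$, $b_j\in\mathbb{R}^{d_j}$, $d_0=d_{in}$, $d_L=d_{out}$, and $\sigma$ applied componentwise. Its width is $\omega_F=\max\{d_j:j=1,\dots,L\}$. For $f:D\to\mathbb{R}^m$ write $\|f\|_D=\sup\{\|f(x)\|:x\in D\}$ (Euclidean norm). Fix real numbers $a<b$. $\omega_{\min}(\sigma,d_{in},d_{out})$ denotes the minimum width $\omega$ such that for every continuous $f:[a,b]^{d_{in}}\to\mathbb{R}^{d_{out}}$ and every $\varepsilon>0$ there exists a neural network function $F:\mathbb{R}^{d_{in}}\to\mathbb{R}^{d_{out}}$ with activation $\sigma$ and $\omega_F\le\omega$ such that $\|f-F\|_{[a,b]^{d_{in}}}<\varepsilon$. *)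

From HB Require Import structures.
From mathcomp Require Import all_boot all_order all_algebra.
From mathcomp Require Import all_classical all_reals all_analysis.
Set Implicit Arguments. Unset Strict Implicit. Unset Printing Implicit Defensive.
Import Order.TTheory GRing.Theory Num.Theory.
Import numFieldNormedType.Exports.
Local Open Scope classical_set_scope.
Local Open Scope ring_scope.

(* A neural network from R^m to R^n (vectors are column vectors 'cV_m).
   [NLast W]        : the final linear layer x |-> W x   (W : d_L x d_{L-1})
   [NLayer W b N]   : x |-> N (sigma (W x + b))           (W : k x m, b : R^k) *)
Inductive net (R : Type) : nat -> nat -> Type :=
| NLast : forall m n : nat, 'M[R]_(n, m) -> net R m n
| NLayer : forall m k n : nat, 'M[R]_(k, m) -> 'cV[R]_k -> net R k n -> net R m n.

Fixpoint net_eval (R : realType) (sigma : R -> R) (m n : nat) (N : net R m n)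
  : 'cV[R]_m -> 'cV[R]_n :=
  match N in net _ m n return 'cV[R]_m -> 'cV[R]_n with
  | NLast _ _ W => fun x => W *m x
  | NLayer _ _ _ W b N' => fun x =>
      net_eval sigma N' (map_mx sigma (W *m x + b))
  end.

Fixpoint net_width (R : Type) (m n : nat) (N : net R m n) : nat :=
  match N with
  | NLast _ n _ => n
  | NLayer _ k _ _ _ N' => maxn k (net_width N')
  end.

Definition eucl_norm (R : realType) (n : nat) (v : 'cV[R]_n) : R :=
  Num.sqrt (\sum_(i < n) v i ord0 ^+ 2).

Definition cube (R : realType) (d : nat) (a b : R) : set 'cV[R]_d :=
  [set x | forall i : 'I_d, a <= x i ord0 <= b].

(* ||f - F||_D < eps, with ||g||_D = sup_{x in D} ||g x|| *)
Definition sup_dist_lt (R : realType) (m n : nat) (D : set 'cV[R]_m)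
  (f F : 'cV[R]_m -> 'cV[R]_n) (eps : R) : Prop :=
  exists2 M : R, M < eps & forall x, D x -> eucl_norm (f x - F x) <= M.

(* omega is an admissible width: every continuous f on [a,b]^din is
   eps-approximable by a sigma-network of width <= omega.
   omega_min(sigma,din,dout) is the least such omega. *)
Definition universal_width (R : realType) (sigma : R -> R) (a b : R)
  (din dout omega : nat) : Prop :=
  forall f : 'cV[R]_din -> 'cV[R]_dout,
    {within @cube R din a b, continuous f} ->
    forall eps : R, 0 < eps ->
    exists N : net R din dout,
      (net_width N <= omega)%N /\ sup_dist_lt (@cube R din a b) f (net_eval sigma N) eps.

Definition relu (R : realType) (t : R) : R := Num.max t 0.

Definition strictly_monotonic (R : realType) (sigma : R -> R) : Prop :=
  (forall x y, x < y -> sigma x < sigma y) \/ (forall x y, x < y -> sigma y < sigma x).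

From HB Require Import structures.
From mathcomp Require Import all_boot all_order all_algebra.
From mathcomp Require Import all_classical all_reals all_analysis.
From mathcomp Require Import lra ring.
Import Order.TTheory GRing.Theory Num.Theory.
Import numFieldNormedType.Exports.
Set Implicit Arguments.
Unset Strict Implicit.
Unset Printing Implicit Defensive.
Local Open Scope classical_set_scope.
Local Open Scope ring_scope.

(* Let f be the squared distance to the centre c of the cube [a,b]^din, put
   in every output coordinate.  A network of width <= din approximating f
   within a quarter of ((b - a)/2)^2 would have, in any output coordinate, a
   value at c lying below all its values on the boundary of the cube by a
   margin.  For continuous strictly monotonic sigma this is impossible: as long
   as the layers are square and invertible, the map x |-> sigma (W x + b) is
   open, so the input G x of the remaining layers ranges over an open set
   G(open cube).  The first layer W that is not invertible has a kernel vector
   v (the output coordinate of the last layer is a linear form, which does not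
   increase along some v), and following the ray G c + t v until it leaves
   G(open cube) gives a boundary point q whose output is at most the output at
   c.  A ReLU network is uniformly approximated on the cube by the same network
   with a leaky ReLU of small slope, which is strictly monotonic. *)

Section Matrices.
Variable R : realType.

Lemma continuous_mx_entries (T : topologicalType) m n (f : T -> 'M[R]_(m, n)) :
  (forall i j, continuous (fun x => f x i j)) -> continuous f.
Proof.
move=> fc x A /nbhs_ballP [e e0 eA].
have : \forall y \near x, forall ij : 'I_m * 'I_n, ball (f x ij.1 ij.2) e (f y ij.1 ij.2).
  by apply: filter_forall => -[i j]; exact: (fc i j x _ (nbhsx_ballx _ _ e0)).
by apply: filterS => y fy; apply: eA; split => // i j; exact: (fy (i, j)).
Qed.

Lemma continuous_mulmx m n p (W : 'M[R]_(m, n)) :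
  continuous (fun x : 'M[R]_(n, p) => W *m x).
Proof.
apply: continuous_mx_entries => i j; under eq_fun do rewrite mxE.
apply: continuous_big => [|k _]; first exact: add_continuous.
by move=> x; apply: continuousM; [exact: cst_continuous | exact: coord_continuous].
Qed.

Lemma continuous_map_mx m n (s : R -> R) : continuous s ->
  continuous (fun x : 'M[R]_(m, n) => map_mx s x).
Proof.
move=> sc; apply: continuous_mx_entries => i j; under eq_fun do rewrite mxE.
by move=> x; apply: continuous_comp; [exact: coord_continuous | exact: sc].
Qed.

Lemma mx_norm_le m n (M : 'M[R]_(m, n)) (B : R) :
  0 <= B -> (forall i j, `|M i j| <= B) -> `|M| <= B.
Proof.
move=> B0 MB; rewrite [leLHS]mx_normrE; apply/bigmax_leP.
by split=> // -[i j] _; exact: MB.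
Qed.

Lemma mx_entry_le_norm m n (M : 'M[R]_(m, n)) i j : `|M i j| <= `|M|.
Proof. by rewrite [leRHS]mx_normrE; apply/bigmax_geP; right; exists (i, j). Qed.

Lemma norm_mulmx_le m n p (W : 'M[R]_(m, n)) (x : 'M[R]_(n, p)) :
  `|W *m x| <= n%:R * `|W| * `|x|.
Proof.
apply: mx_norm_le => [|i j]; first by rewrite !mulr_ge0.
rewrite mxE; apply: le_trans (ler_norm_sum _ _ _) _.
apply: le_trans (_ : \sum_(k < n) `|W| * `|x| <= _).
  by apply: ler_sum => k _; rewrite normrM ler_pM ?mx_entry_le_norm.
by rewrite sumr_const card_ord mulr_natl mulrnAl.
Qed.

Lemma entry_le_eucl_norm n (v : 'cV[R]_n) i : `|v i ord0| <= eucl_norm v.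
Proof.
rewrite /eucl_norm -sqrtr_sqr; apply: ler_wsqrtr.
by rewrite (bigD1 i) //= lerDl; apply: sumr_ge0 => j _; exact: sqr_ge0.
Qed.

End Matrices.

Section Cube.
Variables (R : realType) (d : nat) (a b : R).

Definition open_cube : set 'cV[R]_d := [set x | forall i, a < x i ord0 < b].

Definition cube_boundary : set 'cV[R]_d := cube a b `\` open_cube.

Definition cube_center : 'cV[R]_d := const_mx ((a + b) / 2).

Lemma open_cube_sub : open_cube `<=` cube a b.
Proof. by move=> x xab i; have /andP [xa xb] := xab i; rewrite !ltW. Qed.

Lemma open_cube_center : a < b -> open_cube cube_center.
Proof. by move=> ab i; rewrite mxE; apply/andP; split; lra. Qed.

Lemma open_open_cube : open open_cube.
Proof.
rewrite openE => x xab.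
have near_coord i : \forall y \near x, a < (y : 'cV[R]_d) i ord0 < b.
  have near_itv : \forall t \near x i ord0, a < t < b.
    by apply: filterS (near_in_itvoo (xab i : x i ord0 \in `]a, b[)) => t; rewrite in_itv.
  exact: (@coord_continuous R d 1 i ord0 x _ near_itv).
have := @filter_forall _ _ _ _ (nbhs_filter x) near_coord.
by apply: filterS => y yab i; exact: yab.
Qed.

Lemma compact_cube : compact (@cube R d a b).
Proof.
have -> : @cube R d a b =
    trmx @` [set v : 'rV[R]_d | forall i, `[a, b]%classic (v ord0 i)].
  apply/seteqP; split => [x xab | _ [v vab <-] i].
    by exists x^T; rewrite ?trmxK // => i; rewrite /= mxE in_itv; exact: xab.
  by rewrite mxE; have := vab i; rewrite /= in_itv.
apply: (@continuous_compact _ _ (fun v : 'rV[R]_d => v^T)); last first.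
  by apply: (@rV_compact _ _ (fun=> `[a, b]%classic)) => i; exact: segment_compact.
apply: continuous_subspaceT => x; apply: continuous_mx_entries => i j.
by under eq_fun do rewrite mxE; exact: coord_continuous.
Qed.

Lemma cube_norm_le (x : 'cV[R]_d) : cube a b x -> `|x| <= `|a| + `|b|.
Proof.
move=> xab; apply: mx_norm_le => [|i j]; first by rewrite addr_ge0.
have /andP [xa xb] := xab i; rewrite ord1.
have Na : - a <= `|a| by rewrite -normrN ler_norm.
have := ler_norm b; have := normr_ge0 a; have := normr_ge0 b.
rewrite ler_norml; lra.
Qed.

End Cube.

Section RayExit.
Variables (R : realType) (V : normedModType R).

Lemma ray_exits_bounded_open (U : set V) (y v : V) :
  open U -> bounded_set U -> U y -> v != 0 ->
  exists2 T : R, 0 <= T & (closure U `\` U) (y + T *: v).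
Proof.
rewrite openE => oU bU Uy v0.
have [M MU] : exists M, forall x, U x -> `|x| <= M.
  by have [M [_ MU]] := bU; exists (M + 1); apply: MU; rewrite ltrDl.
have nv : 0 < `|v| by rewrite normr_gt0.
have ray_cont : continuous (fun t : R => y + t *: v).
  by move=> t; apply: cvgD; [exact: cvg_cst | apply: cvgZr_tmp; exact: cvg_id].
pose S := [set t : R | 0 <= t /\ ~ U (y + t *: v)].
have S_lb : lbound S 0 by move=> t [].
have S_ne : S !=set0.
  have M0 : 0 <= M by apply: le_trans (MU y Uy).
  pose t := (M + 1 + `|y|) / `|v|.
  exists t; split; first by rewrite divr_ge0 // !addr_ge0.
  move=> /MU; apply/negP; rewrite -ltNge.
  have := lerB_dist (t *: v) (- y).
  rewrite opprK normrN [_ + y]addrC normrZ ger0_norm ?divr_ge0 ?addr_ge0 //.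
  rewrite divfK ?gt_eqF //; lra.
pose T := inf S.
have T0 : 0 <= T by apply: lb_le_inf.
have T_le t : S t -> T <= t by apply: ge_inf; exists 0.
have U_below t : 0 <= t < T -> U (y + t *: v).
  move=> /andP [t0 tT]; apply: boolp.contrapT => Ut.
  by have := T_le t (conj t0 Ut); rewrite leNgt tT.
have notU : ~ U (y + T *: v).
  move=> UT; have /nbhs_ballP [e e0 eU] := ray_cont T _ (oU _ UT).
  suff : T + e <= T by rewrite gerDl leNgt e0.
  apply: lb_le_inf => // t [t0 Ut]; rewrite leNgt; apply/negP => te.
  apply: Ut; have [tT|Tt] := ltP t T; first by apply: U_below; rewrite t0.
  by apply: eU; rewrite -ball_normE /= ltr_distlC; apply/andP; split; lra.
exists T => //; split => // B /(ray_cont T) /nbhs_ballP [e e0 eB].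
have Tpos : 0 < T.
  by rewrite lt_neqAle T0 andbT; apply: contra_notN notU => /eqP <-; rewrite scale0r addr0.
pose m := Num.min T e.
have [m0 mT me] : [/\ 0 < m, m <= T & m <= e].
  by rewrite /m lt_min Tpos e0 !ge_min !lexx ?orbT.
exists (y + (T - m / 2) *: v); split; first by apply: U_below; apply/andP; split; lra.
apply: eB; rewrite -ball_normE /= opprB addrC subrK ger0_norm; lra.
Qed.

End RayExit.

Section CubeRayExit.
Variables (R : realType) (d m : nat) (a b : R).
Variable G : 'cV[R]_d -> 'cV[R]_m.
Hypotheses (G_cont : continuous G) (G_open : open (G @` open_cube a b)).

Lemma image_ray_exits_cube (p : 'cV[R]_d) (v : 'cV[R]_m) :
  open_cube a b p -> v != 0 ->
  exists2 T : R, 0 <= T & exists2 q, cube_boundary a b q & G q = G p + T *: v.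
Proof.
move=> pab v0.
have G_compact : compact (G @` cube a b).
  by apply: continuous_compact; [exact: continuous_subspaceT | exact: compact_cube].
have G_sub : G @` open_cube a b `<=` G @` cube a b.
  by apply: image_subset; exact: open_cube_sub.
have G_bounded : bounded_set (G @` open_cube a b).
  have := compact_bounded G_compact; rewrite /= /bounded_near.
  by apply: filterS => M MG x /G_sub; exact: MG.
have [T T0 [G_cl G_out]] := ray_exits_bounded_open G_open G_bounded (imageP _ pab) v0.
have : (G @` cube a b) (G p + T *: v).
  have G_closed : closed (G @` cube a b) by apply: compact_closed.
  by rewrite (closure_id (G @` cube a b)).1 //; exact: closureS G_sub _ G_cl.
move=> [q qab Gq]; exists T => //; exists q => //; split => // qab'.
by apply: G_out; rewrite -Gq; exact: imageP.
Qed.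

End CubeRayExit.

Section OpenMaps.
Variable R : realType.

Lemma strict_mono_image_ball_nbhs (s : R -> R) (t e : R) :
  continuous s -> strictly_monotonic s -> 0 < e -> nbhs (s t) (s @` ball t e).
Proof.
move=> sc sm e0; pose h := e / 2; have h0 : 0 < h by rewrite /h; lra.
have s_mid : s t \in s @`] t - h, t + h [.
  rewrite in_itv /= gt_min lt_max.
  by case: sm => sm; apply/andP; split; apply/orP; [left|right|right|left]; apply: sm; lra.
apply: filterS (near_in_itvoo s_mid) => y y_mid.
have th : t - h <= t + h by lra.
have [x x_seg <-] := segment_continuous_surjective th (continuous_subspaceT sc)
  (subset_itv_oo_cc y_mid).
exists x => //; move: x_seg; rewrite /= in_itv /= -ball_normE /= => /andP [].
by rewrite ltr_distlC /h => *; apply/andP; split; lra.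
Qed.

Lemma open_map_mx m n (s : R -> R) (U : set 'M[R]_(m, n)) :
  continuous s -> strictly_monotonic s -> open U -> open (map_mx s @` U).
Proof.
rewrite !openE => sc sm oU _ [y Uy <-].
have /nbhs_ballP [e e0 eU] := oU y Uy.
have near_entry (ij : 'I_m * 'I_n) : \forall z \near map_mx s y,
    (s @` ball (y ij.1 ij.2) e) ((z : 'M[R]_(m, n)) ij.1 ij.2).
  apply: (@coord_continuous R m n ij.1 ij.2); rewrite mxE.
  exact: strict_mono_image_ball_nbhs.
have := @filter_forall _ _ _ _ (nbhs_filter _) near_entry.
apply: filterS => z z_near.
have /boolp.choice [g gP] : forall ij : 'I_m * 'I_n,
    exists t, ball (y ij.1 ij.2) e t /\ s t = z ij.1 ij.2.
  by move=> ij; have [t ? ?] := z_near ij; exists t.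
exists (\matrix_(i, j) g (i, j)).
  by apply: eU; split => // i j; rewrite mxE; exact: (gP (i, j)).1.
by apply/matrixP => i j; rewrite !mxE; exact: (gP (i, j)).2.
Qed.

Lemma open_affine m p (W : 'M[R]_m) (c : 'M[R]_(m, p)) (U : set 'M[R]_(m, p)) :
  W \in unitmx -> open U -> open ((fun x => W *m x + c) @` U).
Proof.
move=> Wu oU.
have -> : (fun x => W *m x + c) @` U = (fun z => invmx W *m (z - c)) @^-1` U.
  apply/seteqP; split => [_ [y Uy <-] | z Uz] /=; first by rewrite addrK mulKmx.
  by exists (invmx W *m (z - c)); rewrite // mulKVmx // subrK.
apply: open_comp => // x _; apply: continuous_comp; last exact: continuous_mulmx.
by apply: continuousB; [exact: cvg_id | exact: cst_continuous].
Qed.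

End OpenMaps.

Section Directions.
Variable R : realType.

Lemma kernel_vector k m (W : 'M[R]_(k, m)) :
  \rank W != m -> exists2 v : 'cV[R]_m, v != 0 & W *m v = 0.
Proof.
move=> rW; have : kermx W^T != 0 by rewrite kermx_eq0 /row_free mxrank_tr.
case/rowV0Pn => u /sub_kermxP uW u0; exists u^T; first by rewrite trmx_eq0.
by rewrite -[W]trmxK -trmx_mul uW trmx0.
Qed.

Lemma nonpos_direction m (w : 'rV[R]_m) :
  (0 < m)%N -> exists2 v : 'cV[R]_m, v != 0 & (w *m v) ord0 ord0 <= 0.
Proof.
move=> m0; have [->|w0] := eqVneq w 0.
  exists (const_mx 1); last by rewrite mul0mx mxE.
  by apply/eqP => /matrixP /(_ (Ordinal m0) ord0) /eqP; rewrite !mxE oner_eq0.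
exists (- w^T); first by rewrite oppr_eq0 trmx_eq0.
rewrite mulmxN mxE oppr_le0 mxE; apply: sumr_ge0 => j _.
by rewrite mxE -expr2 sqr_ge0.
Qed.

End Directions.

Definition no_narrow_bowl (R : realType) (sigma : R -> R) (din : nat) (a b : R) :=
  forall dout (N : net R din dout) (i : 'I_dout) (eta : R),
    (net_width N <= din)%N -> 0 < eta ->
    exists2 q, cube_boundary a b q &
      net_eval sigma N q i ord0 <= net_eval sigma N (cube_center din a b) i ord0 + eta.

Section StrictlyMonotonic.
Variables (R : realType) (sigma : R -> R) (din : nat) (a b : R).
Hypotheses (sigma_cont : continuous sigma) (sigma_mono : strictly_monotonic sigma).
Hypotheses (ab : a < b) (din_gt0 : (0 < din)%N).

Lemma open_layer m (W : 'M[R]_m) (c : 'cV[R]_m) (U : set 'cV[R]_m) :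
  W \in unitmx -> open U -> open ((fun x => map_mx sigma (W *m x + c)) @` U).
Proof.
move=> Wu oU; rewrite -(image_comp (fun x => W *m x + c) (map_mx sigma)).
by apply: open_map_mx => //; exact: open_affine.
Qed.

Lemma narrow_net_boundary_le m n (N : net R m n) :
  (net_width N <= din)%N -> (din <= m)%N ->
  forall G : 'cV[R]_din -> 'cV[R]_m, continuous G -> open (G @` open_cube a b) ->
  forall i, exists2 q, cube_boundary a b q &
    net_eval sigma N (G q) i ord0 <= net_eval sigma N (G (cube_center din a b)) i ord0.
Proof.
elim: N => [m' n' W | m' k n' W c N' IH] /= N_din din_m G G_cont G_open i.
  have [v v0 Wv] := nonpos_direction (row i W) (leq_trans din_gt0 din_m).
  have [T T0 [q qb Gq]] := image_ray_exits_cube G_cont G_open (open_cube_center ab) v0.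
  move: Wv; rewrite -row_mul mxE => Wv.
  by exists q => //; rewrite Gq mulmxDr -scalemxAr mxE gerDl mxE mulr_ge0_le0.
have /andP [k_din N'_din] : (k <= din)%N && (net_width N' <= din)%N by rewrite -geq_max.
have [rW|rW] := eqVneq (\rank W) m'; last first.
  have [v v0 Wv] := kernel_vector rW.
  have [T T0 [q qb Gq]] := image_ray_exits_cube G_cont G_open (open_cube_center ab) v0.
  by exists q => //; rewrite Gq mulmxDr -scalemxAr Wv scaler0 addr0.
have km : k = m'.
  by apply/eqP; rewrite eqn_leq (leq_trans k_din din_m) -{1}rW rank_leq_row.
subst k; apply: IH => //.
  move=> x; apply: continuous_comp; last exact: continuous_map_mx.
  apply: continuousD; last exact: cst_continuous.
  by apply: continuous_comp; [exact: G_cont | exact: continuous_mulmx].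
rewrite -(image_comp G (fun y => map_mx sigma (W *m y + c))).
by apply: open_layer; rewrite // -row_free_unit /row_free rW.
Qed.

Lemma strictly_monotonic_no_narrow_bowl : no_narrow_bowl sigma din a b.
Proof.
move=> dout N i eta N_din eta0.
have id_open : open ((fun x => x) @` @open_cube R din a b).
  by rewrite image_id; exact: open_open_cube.
have [q qb qN] := narrow_net_boundary_le N_din (leqnn din) (fun=> cvg_id) id_open i.
by exists q => //; apply: le_trans qN _; rewrite lerDl ltW.
Qed.

End StrictlyMonotonic.

Definition nonexpansive (R : realType) (s : R -> R) := forall u w, `|s u - s w| <= `|u - w|.

Section ActivationPerturbation.
Variable R : realType.

Lemma nonexpansive_continuous (s : R -> R) : nonexpansive s -> continuous s.
Proof.
move=> s1 x A /nbhs_ballP [e e0 eA]; apply/nbhs_ballP; exists e => // y xy.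
by apply: eA; move: xy; rewrite -!ball_normE /=; exact: le_lt_trans (s1 x y).
Qed.

Lemma map_mx_nonexpansive m n (s : R -> R) (x y : 'M[R]_(m, n)) :
  nonexpansive s -> `|map_mx s x - map_mx s y| <= `|x - y|.
Proof.
move=> s1; apply: mx_norm_le => // i j; rewrite !mxE; apply: le_trans (s1 _ _) _.
by have := mx_entry_le_norm (x - y) i j; rewrite !mxE.
Qed.

Lemma map_mx_dist_le m n (s t : R -> R) (d : R) (x : 'M[R]_(m, n)) :
  0 <= d -> (forall u, `|s u - t u| <= d * `|u|) ->
  `|map_mx s x - map_mx t x| <= d * `|x|.
Proof.
move=> d0 st; apply: mx_norm_le => [|i j]; first by rewrite mulr_ge0.
by rewrite !mxE; apply: le_trans (st _) _; rewrite ler_wpM2l ?mx_entry_le_norm.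
Qed.

Lemma net_eval_lipschitz m n (N : net R m n) : exists2 K, 0 <= K &
  forall s, nonexpansive s -> forall x y,
    `|net_eval s N x - net_eval s N y| <= K * `|x - y|.
Proof.
elim: N => [m' n' W | m' k n' W c N' [K K0 N'_lip]].
  exists (m'%:R * `|W|) => [|s _ x y /=]; first by rewrite mulr_ge0.
  by rewrite -mulmxBr norm_mulmx_le.
exists (K * (m'%:R * `|W|)) => [|s s1 x y /=]; first by rewrite !mulr_ge0.
apply: le_trans (N'_lip s s1 _ _) _; rewrite -mulrA ler_wpM2l //.
apply: le_trans (map_mx_nonexpansive _ _ s1) _.
by rewrite opprD addrACA subrr addr0 -mulmxBr norm_mulmx_le.
Qed.

Lemma net_eval_activation_perturb m n (N : net R m n) :
  exists K1 K2, [/\ 0 <= K1, 0 <= K2 &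
    forall (s t : R -> R) (d : R), 0 <= d -> nonexpansive s -> nonexpansive t ->
    t 0 = 0 -> (forall u, `|s u - t u| <= d * `|u|) ->
    forall x, `|net_eval s N x - net_eval t N x| <= d * (K1 * `|x| + K2)].
Proof.
elim: N => [m' n' W | m' k n' W c N' [K1 [K2 [K1_ge0 K2_ge0 N'_perturb]]]].
  exists 0, 0; split => // s t d *.
  by rewrite subrr normr0 mul0r add0r mulr0.
have [K K0 N'_lip] := net_eval_lipschitz N'.
exists ((K + K1) * (m'%:R * `|W|)), ((K + K1) * `|c| + K2).
split; [by rewrite !mulr_ge0 ?addr_ge0 | by rewrite !addr_ge0 ?mulr_ge0 ?addr_ge0 |].
move=> s t d d0 s1 t1 t0 st x /=.
set u := W *m x + c.
have u_le : `|u| <= m'%:R * `|W| * `|x| + `|c|.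
  by apply: le_trans (ler_normD _ _) _; rewrite lerD2r norm_mulmx_le.
have tu_le : `|map_mx t u| <= `|u|.
  have t_zero : map_mx t 0 = 0 :> 'cV[R]_k by apply/matrixP => i j; rewrite !mxE t0.
  by have := map_mx_nonexpansive u 0 t1; rewrite t_zero !subr0.
have E1 := N'_lip s s1 (map_mx s u) (map_mx t u).
have E2 := N'_perturb s t d d0 s1 t1 t0 st (map_mx t u).
apply: le_trans (ler_distD (net_eval s N' (map_mx t u)) _ _) _.
apply: le_trans (lerD E1 E2) _.
apply: le_trans (_ : K * (d * `|u|) + d * (K1 * `|u| + K2) <= _).
  apply: lerD; rewrite ler_wpM2l //; first exact: map_mx_dist_le.
  by rewrite lerD2r ler_wpM2l.
have -> : K * (d * `|u|) + d * (K1 * `|u| + K2) = d * ((K + K1) * `|u| + K2) by ring.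
by rewrite ler_wpM2l // addrA -mulrA -mulrDr lerD2r ler_wpM2l ?addr_ge0.
Qed.

End ActivationPerturbation.

Definition leaky_relu (R : realType) (d t : R) : R := if 0 <= t then t else d * t.

Section LeakyRelu.
Variable R : realType.
Implicit Types d t u w : R.

Lemma leaky_relu0 : leaky_relu 0 = @relu R.
Proof.
apply: boolp.funext => t; rewrite /leaky_relu /relu /Order.max mul0r.
by case: (leP 0 t) => t0; case: (ltP t 0) => //; lra.
Qed.

Lemma leaky_relu_nonexpansive d : 0 <= d <= 1 -> nonexpansive (leaky_relu d).
Proof.
move=> /andP [d0 d1] u w; rewrite /leaky_relu.
have := ler_norm (u - w); have : w - u <= `|u - w| by rewrite distrC ler_norm.
rewrite ler_norml; case: (leP 0 u) => u0; case: (leP 0 w) => w0 *.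
all: by apply/andP; split; nra.
Qed.

Lemma leaky_relu_relu_le d u : 0 <= d -> `|leaky_relu d u - relu u| <= d * `|u|.
Proof.
move=> d0; rewrite -leaky_relu0 /leaky_relu mul0r.
case: (leP 0 u) => u0; first by rewrite subrr normr0 mulr_ge0.
by rewrite subr0 normrM ger0_norm.
Qed.

Lemma leaky_relu_increasing d : 0 < d -> strictly_monotonic (leaky_relu d).
Proof.
move=> d0; left => u w uw; rewrite /leaky_relu.
by case: (leP 0 u) => u0; case: (leP 0 w) => w0; nra.
Qed.

End LeakyRelu.

Lemma relu_no_narrow_bowl (R : realType) (din : nat) (a b : R) :
  a < b -> (0 < din)%N -> no_narrow_bowl (@relu R) din a b.
Proof.
move=> ab din_gt0 dout N i eta N_din eta0.
have [K1 [K2 [K1_ge0 K2_ge0 perturb]]] := net_eval_activation_perturb N.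
pose C := K1 * (`|a| + `|b|) + K2.
have C0 : 0 <= C by rewrite addr_ge0 // mulr_ge0 // addr_ge0.
pose d := Num.min 1 (eta / (3 * (C + 1))).
have [d0 d1 dC] : [/\ 0 < d, d <= 1 & d * C <= eta / 3].
  split; first by rewrite lt_min ltr01 divr_gt0 // mulr_gt0 //; lra.
    by rewrite ge_min lexx.
  have : d <= eta / (3 * (C + 1)) by rewrite ge_min lexx orbT.
  by rewrite ler_pdivlMr; [nra | lra].
have d01 : 0 <= d <= 1 by rewrite ltW.
have close x : cube a b x ->
    `|net_eval (leaky_relu d) N x i ord0 - net_eval (@relu R) N x i ord0| <= eta / 3.
  move=> xab.
  have := mx_entry_le_norm (net_eval (leaky_relu d) N x - net_eval (@relu R) N x) i ord0.
  rewrite !mxE => /le_trans; apply; apply: le_trans (perturb _ _ d _ _ _ _ _ x) _.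
  - exact: ltW.
  - exact: leaky_relu_nonexpansive.
  - by rewrite -leaky_relu0; apply: leaky_relu_nonexpansive; rewrite lexx ler01.
  - by rewrite -leaky_relu0 /leaky_relu lexx.
  - by move=> u; apply: leaky_relu_relu_le; rewrite ltW.
  apply: le_trans dC; rewrite ler_pM2l // /C lerD2r ler_wpM2l //.
  exact: cube_norm_le.
have eta3 : 0 < eta / 3 by rewrite divr_gt0.
have [q qb qN] := strictly_monotonic_no_narrow_bowl
  (nonexpansive_continuous (leaky_relu_nonexpansive d01))
  (leaky_relu_increasing d0) ab din_gt0 i N_din eta3.
exists q => //.
have := close q qb.1; have := close _ (open_cube_sub (open_cube_center ab)).
rewrite !ler_norml => /andP [c1 c2] /andP [c3 c4]; lra.
Qed.

Section Bowl.
Variables (R : realType) (d : nat) (a b : R).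

Definition bowl (x : 'cV[R]_d) : R := \sum_j (x j ord0 - (a + b) / 2) ^+ 2.

Lemma continuous_bowl : continuous bowl.
Proof.
apply: continuous_big => [|j _ x]; first exact: add_continuous.
apply: (@continuous_comp _ _ _ (fun y : 'cV[R]_d => y j ord0 - (a + b) / 2) (fun t => t ^+ 2)).
  by apply: continuousB; [exact: coord_continuous | exact: cst_continuous].
exact: exprn_continuous.
Qed.

Lemma bowl_center : bowl (cube_center d a b) = 0.
Proof. by rewrite /bowl big1 // => j _; rewrite mxE subrr expr0n. Qed.

Lemma bowl_boundary_ge x : cube_boundary a b x -> ((b - a) / 2) ^+ 2 <= bowl x.
Proof.
move=> [xab /boolp.existsNP [j xj]]; have /andP [xa xb] := xab j.
have x_end : x j ord0 = a \/ x j ord0 = b.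
  case: (eqVneq (x j ord0) a) => [|/eqP xa']; first by left.
  by right; apply: boolp.contrapT => xb'; apply: xj; apply/andP; split; lra.
rewrite /bowl (bigD1 j) //=.
have -> : (x j ord0 - (a + b) / 2) ^+ 2 = ((b - a) / 2) ^+ 2.
  by case: x_end => ->; [rewrite -sqrrN |]; congr (_ ^+ 2); lra.
by rewrite lerDl; apply: sumr_ge0 => i _; exact: sqr_ge0.
Qed.

End Bowl.

Lemma no_narrow_bowl_not_approx (R : realType) (sigma : R -> R) (din dout : nat)
    (a b : R) (N : net R din dout) :
  no_narrow_bowl sigma din a b -> a < b -> (0 < dout)%N -> (net_width N <= din)%N ->
  ~ sup_dist_lt (cube a b) (fun x => const_mx (bowl a b x)) (net_eval sigma N)
      (((b - a) / 2) ^+ 2 / 4).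
Proof.
move=> N_bowl ab dout_gt0 N_din [M M_lt approx].
pose i := Ordinal dout_gt0; set r := ((b - a) / 2) ^+ 2 in M_lt *.
have r_gt0 : 0 < r by rewrite exprn_gt0 // divr_gt0 // subr_gt0.
have err x : cube a b x -> `|bowl a b x - net_eval sigma N x i ord0| <= M.
  move=> xab; apply: le_trans (approx x xab).
  by have := entry_le_eucl_norm (const_mx (bowl a b x) - net_eval sigma N x) i; rewrite !mxE.
have [q qb qN] : exists2 q, cube_boundary a b q &
    net_eval sigma N q i ord0 <= net_eval sigma N (cube_center din a b) i ord0 + r / 4.
  by apply: N_bowl => //; rewrite divr_gt0.
have := err q qb.1; have := err _ (open_cube_sub (open_cube_center ab)).
have := bowl_boundary_ge qb; rewrite bowl_center -/r !ler_norml.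
by move=> ? /andP [? ?] /andP [? ?]; lra.
Qed.

Theorem corollary11 (R : realType) (a b : R) (hab : a < b) (sigma : R -> R)
  (hsigma : (continuous sigma /\ strictly_monotonic sigma) \/ sigma = @relu R)
  (din dout : nat) (hdin : (0 < din)%N) (hdout : (0 < dout)%N) :
  forall omega : nat, universal_width sigma a b din dout omega -> (din < omega)%N.
Proof.
move=> omega universal; rewrite ltnNge; apply/negP => omega_din.
have N_bowl : no_narrow_bowl sigma din a b.
  case: hsigma => [[sigma_cont sigma_mono] | ->]; last exact: relu_no_narrow_bowl.
  exact: strictly_monotonic_no_narrow_bowl.
have bowl_cont : continuous (fun x : 'cV[R]_din => const_mx (bowl a b x) : 'cV[R]_dout).
  apply: continuous_mx_entries => i j; under eq_fun do rewrite mxE.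
  exact: continuous_bowl.
have eps_gt0 : 0 < ((b - a) / 2) ^+ 2 / 4 by rewrite divr_gt0 ?exprn_gt0 ?divr_gt0 ?subr_gt0.
have [N [N_omega approx]] := universal _ (continuous_subspaceT bowl_cont) _ eps_gt0.
exact: no_narrow_bowl_not_approx N_bowl hab hdout (leq_trans N_omega omega_din) approx.
Qed.
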